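(* Assume Case 4 holds with index $k$. Let $(C,D)=(n_{k+1},m_{k+1})$ and for $n\ge1$ put $(C_n,D_n)=(\gamma_n-(\gamma-C)d^{n-1},\ Dd^{n-1})$ and $(C_n^*,D_n^* )=\big((\delta^{n-1}+\delta^{n-2}D+\cdots+D^{n-1})C,\ D^n\big)$. (i) If $\delta>T_k$, then for every $n\ge1$, $(C_n,D_n)$ is the vertex of $N(Q^n)$ immediately following $(\gamma_n,d^n)$ (in order of increasing $x$-coordinate), the segment joining them has slope $-(l_1+l_2)^{-1}$, and $\delta^n$ is strictly bigger than the $y$-intercept of the line through these two points. (ii) If $\delta=T_k$ and $m_{k+1}>0$, then for every $n\ge1$, $(C_n^*,D_n^* )$ is the vertex of $N(Q^n)$ immediately following $(\gamma_n,d^n)$, the segment joining them has slope $-(l_1+l_2)^{-1}$, and $\delta^n$ equals the $y$-intercept of the line through these two points.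
   Context: Let $f(z,w)=(p(z),q(z,w))$ be a holomorphic skew product germ at the origin of $\mathbb{C}^2$ with $f(0,0)=(0,0)$, where $p(z)=a_\delta z^\delta+O(z^{\delta+1})$ with $a_\delta\neq0$ and integer $\delta\ge1$, and $q(z,w)=\sum_{i+j\ge1}b_{ij}z^iw^j$ is not identically zero. For $n\ge1$ write $f^n=(p^n,Q^n)$. The Newton polygon $N(g)$ of a nonzero germ $g=\sum g_{ij}z^iw^j$ is the convex hull of $\bigcup_{g_{ij}\neq0}\{(x,y):x\ge i,\ y\ge j\}$. Let $(n_1,m_1),\dots,(n_s,m_s)$ be the vertices of $N(q)$ with $n_1<\cdots<n_s$, $m_1>\cdots>m_s$; for $1\le k\le s-1$ let $T_k$ be the $y$-intercept of the line through $(n_k,m_k)$ and $(n_{k+1},m_{k+1})$. Case 4 means: $s>2$ and $T_k\le\delta\le T_{k-1}$ for some $2\le k\le s-1$; for this $k$ set $(\gamma,d)=(n_k,m_k)$, $l_1=\frac{n_k-n_{k-1}}{m_{k-1}-m_k}$ and $l_2$ defined by $l_1+l_2=\frac{n_{k+1}-n_k}{m_k-m_{k+1}}$. Define $\gamma_n=\gamma(\delta^{n-1}+\delta^{n-2}d+\cdots+d^{n-1})$. *)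

From HB Require Import structures.
From mathcomp Require Import all_boot all_order all_algebra.
From mathcomp Require Import reals.
From mathcomp Require Import complex.
Set Implicit Arguments. Unset Strict Implicit. Unset Printing Implicit Defensive.
Import Order.TTheory GRing.Theory Num.Theory.
Local Open Scope ring_scope.

Section Defs.
Variable R : realType.
Local Notation C := R[i].

(* A power series in (z,w): coefficient of z^i w^j is g i j. *)
Definition ps2 := nat -> nat -> C.
Definition ps1 := nat -> C.

(* convergent (= holomorphic germ at the origin): Cauchy-type bound *)
Definition convergent2 (g : ps2) : Prop :=
  exists (M r : R), 0 < r /\ forall i j, `|g i j| <= real_complex R (M * r ^+ (i + j)).
Definition convergent1 (g : ps1) : Prop :=
  exists (M r : R), 0 < r /\ forall i, `|g i| <= real_complex R (M * r ^+ i).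

Definition one2 : ps2 := fun i j => if (i == 0%N) && (j == 0%N) then 1 else 0.
Definition Xz : ps2 := fun i j => if (i == 1%N) && (j == 0%N) then 1 else 0.
Definition Xw : ps2 := fun i j => if (i == 0%N) && (j == 1%N) then 1 else 0.
Definition lift1 (g : ps1) : ps2 := fun i j => if j == 0%N then g i else 0.

Definition mul2 (g h : ps2) : ps2 := fun i j =>
  \sum_(a < i.+1) \sum_(b < j.+1) g a b * h (i - a)%N (j - b)%N.
Definition pow2 (g : ps2) (n : nat) : ps2 := iter n (mul2 g) one2.

(* g(P(z,w), S(z,w)) for P, S without constant term: only the (finitely
   many) terms a + b <= i + j contribute to the coefficient of z^i w^j. *)
Definition comp2 (g P S : ps2) : ps2 := fun i j =>
  \sum_(a < (i + j).+1) \sum_(b < (i + j).+1)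
     g a b * mul2 (pow2 P a) (pow2 S b) i j.

(* f = (p, q);  f^n = (p^n, Q^n) with f^0 = id, f^(n+1) = f o f^n *)
Definition fiter (p : ps1) (q : ps2) (n : nat) : ps2 * ps2 :=
  iter n (fun PS => (comp2 (lift1 p) PS.1 PS.2, comp2 q PS.1 PS.2)) (Xz, Xw).
Definition Qn (p : ps1) (q : ps2) (n : nat) : ps2 := (fiter p q n).2.

Definition quadrants (g : ps2) (v : R * R) : Prop :=
  exists i j, g i j != 0 /\ (i%:R <= v.1) /\ (j%:R <= v.2).

Definition convex_hull (U : R * R -> Prop) (v : R * R) : Prop :=
  exists (n : nat) (lam : 'I_n -> R) (pt : 'I_n -> R * R),
    (forall k, 0 <= lam k) /\ \sum_(k < n) lam k = 1 /\
    (forall k, U (pt k)) /\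
    v.1 = \sum_(k < n) lam k * (pt k).1 /\
    v.2 = \sum_(k < n) lam k * (pt k).2.

Definition newton_polygon (g : ps2) : R * R -> Prop :=
  convex_hull (quadrants g).

Definition vertex (K : R * R -> Prop) (v : R * R) : Prop :=
  K v /\ forall (a b : R * R) (t : R), K a -> K b -> 0 < t -> t < 1 ->
    v.1 = t * a.1 + (1 - t) * b.1 -> v.2 = t * a.2 + (1 - t) * b.2 -> a = b.

Definition next_vertex (K : R * R -> Prop) (v1 v2 : R * R) : Prop :=
  vertex K v1 /\ vertex K v2 /\ v1.1 < v2.1 /\
  forall v, vertex K v -> ~ (v1.1 < v.1 /\ v.1 < v2.1).

Definition slope (v1 v2 : R * R) : R := (v2.2 - v1.2) / (v2.1 - v1.1).
Definition yintercept (v1 v2 : R * R) : R := v1.2 - slope v1 v2 * v1.1.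

Definition pt (x y : nat) : R * R := (x%:R, y%:R).

End Defs.

Definition gsum (a b n : nat) : nat := \sum_(i < n) a ^ (n.-1 - i) * b ^ i.

From HB Require Import structures.
From mathcomp Require Import all_boot all_order all_algebra.
From mathcomp Require Import reals complex boolp.
From mathcomp.algebra_tactics Require Import ring lra.
From mathcomp Require Import zify.
Import Order.TTheory GRing.Theory Num.Theory.
Local Open Scope ring_scope.
Set Implicit Arguments. Unset Strict Implicit. Unset Printing Implicit Defensive.

(* The iterates Q^n are never computed; only their leading monomials are
   tracked.  For a weight (al,be) with al, be > 0 and a tie-breaking sign
   sg = -1 or 1, [leading g al be sg X Y] says that (X,Y) is the upper-left
   (sg = -1) or lower-right (sg = 1) end point of the face of N(g) with inner
   normal (al,be).
   1. Leading monomials multiply, hence pass to powers and to compositions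
      q(P,S) whenever a single monomial of q minimises the forms induced by
      the leading terms of P and S ([leading_comp]).
   2. Convex geometry: two leading monomials of the same weight with opposite
      tie-breaks are consecutive vertices of N(g), with explicit slope and
      y-intercept ([next_vertex_of_leading]).
   3. The ordered vertex list of N(q) makes the end points of each edge of
      N(q) leading monomials for its normal ([edge_leading]) and gives the
      convexity of N(q) at each vertex ([edge_slopes_decrease]).
   4. Along f^(n+1) = f o f^n the first component leads with (delta^n, 0).
      In case (ii) the edge of N(q) lies on the line through (0,delta), and
      both end points propagate in closed form ([leading_iterates_edge]).
      In case (i) the forms induced by f^n stay inside the open cone of
      normals at the vertex (gamma,d) ([cone_orbit]), so (gamma,d) is the
      unique minimiser and the end points follow an affine recursion
      ([leading_iterates_vertex]). *)

Lemma double_sum_single (V : nmodType) n m (F : nat -> nat -> V) a0 b0 :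
  (a0 < n)%N -> (b0 < m)%N ->
  (forall a b, (a < n)%N -> (b < m)%N -> F a b != 0 -> a = a0 /\ b = b0) ->
  \sum_(a < n) \sum_(b < m) F a b = F a0 b0.
Proof.
move=> ha hb H.
rewrite (bigD1 (Ordinal ha)) //= [X in _ + X]big1 ?addr0 => [|a /negPf neq].
  rewrite (bigD1 (Ordinal hb)) //= [X in _ + X]big1 ?addr0 // => b /negPf neq.
  apply/eqP; apply: contraT => /(H a0 b ha (ltn_ord b)) [_ eb].
  by move: neq; rewrite -val_eqE /= eb eqxx.
apply: big1 => b _; apply/eqP; apply: contraT => /(H a b (ltn_ord a) (ltn_ord b)) [ea _].
by move: neq; rewrite -val_eqE /= ea eqxx.
Qed.

Lemma double_sum_support (V : nmodType) n m (F : 'I_n -> 'I_m -> V) :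
  \sum_(a < n) \sum_(b < m) F a b != 0 -> exists a b, F a b != 0.
Proof.
have sum_support k (G : 'I_k -> V) : \sum_(i < k) G i != 0 -> exists i, G i != 0.
  case: (pickP (fun i => G i != 0)) => [i nz _|G0]; first by exists i.
  by rewrite big1 ?eqxx // => i _; apply/eqP/negbFE/G0.
by move=> /sum_support [a] /sum_support [b nz]; exists a, b.
Qed.

Section LeadingTerms.
Variable R : realType.
Implicit Types (g h q P S : ps2 R) (al be sg : R).

Lemma natr_inj : injective (fun n : nat => n%:R : R).
Proof. exact: mulrIn (oner_neq0 R). Qed.

Definition wdeg al be (i j : nat) : R := al * i%:R + be * j%:R.

Lemma wdegD al be i1 j1 i2 j2 :
  wdeg al be (i1 + i2) (j1 + j2) = wdeg al be i1 j1 + wdeg al be i2 j2.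
Proof. rewrite /wdeg !natrD; ring. Qed.

Lemma wdegM al be a i j : wdeg al be (a * i) (a * j) = a%:R * wdeg al be i j.
Proof. rewrite /wdeg !natrM; ring. Qed.

(* (X,Y) is the leading monomial of g for the weight (al,be): among the
   monomials of g of minimal weighted degree it has the smallest exponent
   of w when sg = 1 and the largest one when sg = -1.  For al, be > 0 this
   is an end point of the face of N(g) with inner normal (al,be). *)
Definition leading g al be sg (X Y : nat) : Prop :=
  g X Y != 0 /\ forall i j, g i j != 0 ->
    wdeg al be X Y <= wdeg al be i j /\
    (wdeg al be i j = wdeg al be X Y -> sg * Y%:R <= sg * j%:R).

Lemma leading_monomial g al be sg X Y :
  g X Y != 0 -> (forall i j, g i j != 0 -> i = X /\ j = Y) ->
  leading g al be sg X Y.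
Proof. by move=> nz H; split => // i j /H [-> ->]. Qed.

Lemma leading_one al be sg : leading (one2 R) al be sg 0 0.
Proof.
apply: leading_monomial => [|i j]; rewrite /one2 ?eqxx ?oner_neq0 //.
by case: (i =P 0%N) => [->|]; case: (j =P 0%N) => [->|] //=; rewrite eqxx.
Qed.

Lemma leading_Xz al be sg : leading (Xz R) al be sg 1 0.
Proof.
apply: leading_monomial => [|i j]; rewrite /Xz ?eqxx ?oner_neq0 //.
by case: (i =P 1%N) => [->|]; case: (j =P 0%N) => [->|] //=; rewrite eqxx.
Qed.

Lemma leading_Xw al be sg : leading (Xw R) al be sg 0 1.
Proof.
apply: leading_monomial => [|i j]; rewrite /Xw ?eqxx ?oner_neq0 //.
by case: (i =P 0%N) => [->|]; case: (j =P 1%N) => [->|] //=; rewrite eqxx.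
Qed.

Lemma mul_term_above g h al be sg (X1 Y1 X2 Y2 i j a b : nat) :
  al != 0 -> sg != 0 -> leading g al be sg X1 Y1 -> leading h al be sg X2 Y2 ->
  (a <= i)%N -> (b <= j)%N -> g a b != 0 -> h (i - a)%N (j - b)%N != 0 ->
  wdeg al be (X1 + X2)%N (Y1 + Y2)%N <= wdeg al be i j /\
  (wdeg al be i j = wdeg al be (X1 + X2)%N (Y1 + Y2)%N ->
     sg * (Y1 + Y2)%N%:R <= sg * j%:R /\
     (sg * (Y1 + Y2)%N%:R = sg * j%:R -> a = X1 /\ b = Y1)).
Proof.
move=> al0 sg0 [_ Lg] [_ Lh] ai bj gab hab.
have [La Ea] := Lg _ _ gab; have [Lb Eb] := Lh _ _ hab.
have splitij : wdeg al be i j = wdeg al be a b + wdeg al be (i - a) (j - b).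
  by rewrite -wdegD !subnKC.
rewrite wdegD splitij; split; first by lra.
move=> e.
have ea : wdeg al be a b = wdeg al be X1 Y1 by lra.
have eb : wdeg al be (i - a) (j - b) = wdeg al be X2 Y2 by lra.
have sa := Ea ea; have sb := Eb eb.
have Hj : (j%:R : R) = b%:R + (j - b)%N%:R by rewrite -natrD subnKC.
rewrite natrD Hj; split; first by lra.
move=> es; have bY : b = Y1 by apply/natr_inj/(mulfI sg0); lra.
split => //; apply/natr_inj/(mulfI al0).
by move: ea; rewrite /wdeg bY; lra.
Qed.

Lemma leading_mul g h al be sg X1 Y1 X2 Y2 :
  al != 0 -> sg != 0 -> leading g al be sg X1 Y1 -> leading h al be sg X2 Y2 ->
  leading (mul2 g h) al be sg (X1 + X2)%N (Y1 + Y2)%N /\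
  mul2 g h (X1 + X2)%N (Y1 + Y2)%N = g X1 Y1 * h X2 Y2.
Proof.
move=> al0 sg0 Lg Lh; have [g0 _] := Lg; have [h0 _] := Lh.
have key := mul_term_above al0 sg0 Lg Lh.
have coef : mul2 g h (X1 + X2)%N (Y1 + Y2)%N = g X1 Y1 * h X2 Y2.
  rewrite /mul2 (@double_sum_single _ _ _
    (fun a b => g a b * h (X1 + X2 - a)%N (Y1 + Y2 - b)%N) X1 Y1) ?addKn //.
  - by rewrite ltnS leq_addr.
  - by rewrite ltnS leq_addr.
  move=> a b; rewrite !ltnS => ai bj; rewrite mulf_eq0 negb_or => /andP [gab hab].
  by have [_ /(_ erefl) [_ /(_ erefl)]] := key _ _ _ _ ai bj gab hab.
split => //; split; first by rewrite coef mulf_neq0.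
move=> i j; rewrite /mul2 => /double_sum_support [a [b]].
have ai : (a <= i)%N := ltn_ord a; have bj : (b <= j)%N := ltn_ord b.
rewrite mulf_eq0 negb_or => /andP [gab hab].
have [K1 K] := key _ _ _ _ ai bj gab hab; split => // e.
by have [] := K e.
Qed.

Lemma leading_pow g al be sg X Y :
  al != 0 -> sg != 0 -> leading g al be sg X Y ->
  forall a, leading (pow2 g a) al be sg (a * X)%N (a * Y)%N.
Proof.
move=> al0 sg0 Lg; elim=> [|a IH]; first by rewrite !mul0n; exact: leading_one.
by rewrite !mulSn; case: (leading_mul al0 sg0 Lg IH).
Qed.

(* This is the
   condition under which a composition q(P,S) has a single leading term. *)
Definition lexmin q (u v y z : R) (a0 b0 : nat) : Prop :=
  q a0 b0 != 0 /\ forall a b, q a b != 0 ->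
    a0%:R * u + b0%:R * v <= a%:R * u + b%:R * v /\
    (a%:R * u + b%:R * v = a0%:R * u + b0%:R * v ->
     a0%:R * y + b0%:R * z <= a%:R * y + b%:R * z /\
     (a0%:R * y + b0%:R * z = a%:R * y + b%:R * z -> a = a0 /\ b = b0)).

Definition strict_min q (u v : R) (a0 b0 : nat) : Prop :=
  q a0 b0 != 0 /\ forall a b, q a b != 0 ->
    a0%:R * u + b0%:R * v <= a%:R * u + b%:R * v /\
    (a%:R * u + b%:R * v = a0%:R * u + b0%:R * v -> a = a0 /\ b = b0).

Lemma strict_min_lexmin q (u v y z : R) a0 b0 :
  strict_min q u v a0 b0 -> lexmin q u v y z a0 b0.
Proof. by move=> [nz H]; split => // a b /H [h1 h2]; split => // /h2 [-> ->]. Qed.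

Lemma leading_lexmin q al be sg a0 b0 :
  al != 0 -> sg != 0 -> leading q al be sg a0 b0 -> lexmin q al be 0 sg a0 b0.
Proof.
move=> al0 sg0 [nz H]; split => // a b /H [h1 h2].
have wE (i j : nat) : i%:R * al + j%:R * be = wdeg al be i j by rewrite /wdeg; ring.
have sE (i j : nat) : i%:R * 0 + j%:R * sg = sg * j%:R by ring.
rewrite !wE !sE; split => // e; split; first exact: h2.
move=> es; have bb : b = b0 by apply/natr_inj/(mulfI sg0).
split => //; apply/natr_inj/(mulfI al0).
by move: e; rewrite /wdeg bb; lra.
Qed.

Lemma lexmin_scale q (u v y z c c' : R) a0 b0 :
  0 < c -> 0 < c' -> lexmin q u v y z a0 b0 ->
  lexmin q (c * u) (c * v) (c' * y) (c' * z) a0 b0.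
Proof.
move=> c0 c'0 [nz H]; split => // a b /H [h1 h2].
have E (t r1 r2 : R) (i j : nat) : i%:R * (t * r1) + j%:R * (t * r2) =
  t * (i%:R * r1 + j%:R * r2) by ring.
rewrite !E ler_pM2l // (ler_pM2l c'0); split => // /(mulfI (lt0r_neq0 c0)) /h2 [h3 h4].
by split => // /(mulfI (lt0r_neq0 c'0)).
Qed.

Lemma comp_term_above q P S al be sg (XP YP XS YS a0 b0 i j a b : nat) :
  al != 0 -> sg != 0 -> leading P al be sg XP YP -> leading S al be sg XS YS ->
  lexmin q (wdeg al be XP YP) (wdeg al be XS YS) (sg * YP%:R) (sg * YS%:R) a0 b0 ->
  q a b != 0 -> mul2 (pow2 P a) (pow2 S b) i j != 0 ->
  let X := (a0 * XP + b0 * XS)%N in let Y := (a0 * YP + b0 * YS)%N in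
  wdeg al be X Y <= wdeg al be i j /\
  (wdeg al be i j = wdeg al be X Y ->
     sg * Y%:R <= sg * j%:R /\ (sg * Y%:R = sg * j%:R -> a = a0 /\ b = b0)).
Proof.
move=> al0 sg0 LP LS [_ Hq] qab Mab X Y.
have [[_ /(_ _ _ Mab) [M1 M2]] _] :=
  leading_mul al0 sg0 (leading_pow al0 sg0 LP a) (leading_pow al0 sg0 LS b).
have wM a' b' : wdeg al be (a' * XP + b' * XS)%N (a' * YP + b' * YS)%N =
    a'%:R * wdeg al be XP YP + b'%:R * wdeg al be XS YS by rewrite wdegD !wdegM.
have sM a' b' : sg * (a' * YP + b' * YS)%N%:R =
    a'%:R * (sg * YP%:R) + b'%:R * (sg * YS%:R) by rewrite natrD !natrM; ring.
have [Q1 Q2] := Hq _ _ qab.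
rewrite wM in M1 M2; rewrite /X /Y wM sM; split; first exact: le_trans Q1 M1.
move=> e.
have e1 : a%:R * wdeg al be XP YP + b%:R * wdeg al be XS YS =
      a0%:R * wdeg al be XP YP + b0%:R * wdeg al be XS YS.
  by apply/eqP; rewrite eq_le Q1 andbT -e.
have [Q3 Q4] := Q2 e1; have := M2 (etrans e (esym e1)); rewrite sM => M3.
split; first exact: le_trans Q3 M3.
by move=> e2; apply: Q4; apply/eqP; rewrite eq_le Q3 /= e2.
Qed.

Lemma leading_comp q P S al be sg XP YP XS YS a0 b0 :
  al != 0 -> sg != 0 -> leading P al be sg XP YP -> leading S al be sg XS YS ->
  (0 < XP + YP)%N -> (0 < XS + YS)%N ->
  lexmin q (wdeg al be XP YP) (wdeg al be XS YS) (sg * YP%:R) (sg * YS%:R) a0 b0 ->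
  leading (comp2 q P S) al be sg (a0 * XP + b0 * XS)%N (a0 * YP + b0 * YS)%N.
Proof.
move=> al0 sg0 LP LS HP HS Lq; have [q0 _] := Lq.
have key := comp_term_above al0 sg0 LP LS Lq.
set X := (a0 * XP + b0 * XS)%N; set Y := (a0 * YP + b0 * YS)%N.
pose M a b := mul2 (pow2 P a) (pow2 S b).
have coef : comp2 q P S X Y = q a0 b0 * M a0 b0 X Y.
  rewrite /comp2 (@double_sum_single _ _ _ (fun a b => q a b * M a b X Y) a0 b0) //.
  - rewrite ltnS /X /Y addnACA -mulnDr (leq_trans _ (leq_addr _ _)) //.
    by rewrite -{1}(muln1 a0) leq_mul2l HP orbT.
  - rewrite ltnS /X /Y addnACA -mulnDr -mulnDr (leq_trans _ (leq_addl _ _)) //.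
    by rewrite -{1}(muln1 b0) leq_mul2l HS orbT.
  move=> a b _ _; rewrite mulf_eq0 negb_or => /andP [qab Mab].
  by have [_ /(_ erefl) [_ /(_ erefl)]] := key _ _ _ _ qab Mab.
split.
  rewrite coef /M /X /Y.
  have [[_ _] ->] := leading_mul al0 sg0 (leading_pow al0 sg0 LP a0) (leading_pow al0 sg0 LS b0).
  rewrite !mulf_neq0 //.
    by case: (leading_pow al0 sg0 LP a0).
  by case: (leading_pow al0 sg0 LS b0).
move=> i j; rewrite /comp2 => /double_sum_support [a [b]].
rewrite mulf_eq0 negb_or => /andP [qab Mab].
have [K1 K] := key _ _ _ _ qab Mab; split => // e; by have [] := K e.
Qed.

Section NewtonPolygonGeometry.
Variable g : ps2 R.
Local Notation K := (newton_polygon g).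

Lemma support_in_hull v : quadrants g v -> K v.
Proof.
move=> H; exists 1%N, (fun _ => 1), (fun _ => v); rewrite !big_ord1 !mul1r.
by split => //; split => //.
Qed.

Lemma hull_shift v (h1 h2 : R) : K v -> 0 <= h1 -> 0 <= h2 -> K (v.1 + h1, v.2 + h2).
Proof.
move=> [n [lam [pt [L0 [L1 [LU [E1 E2]]]]]]] H1 H2.
exists n, lam, (fun k => ((pt k).1 + h1, (pt k).2 + h2)); split => //; split => //; split.
  move=> k; have [i [j [nz [a b]]]] := LU k; exists i, j; split => //=; split; lra.
rewrite /= E1 E2; split.
  rewrite -[h1]mul1r -{1}L1 mulr_suml -big_split /=; apply: eq_bigr => k _; ring.
rewrite -[h2]mul1r -{1}L1 mulr_suml -big_split /=; apply: eq_bigr => k _; ring.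
Qed.

Lemma sum_split_ord n1 n2 (F : 'I_(n1 + n2) -> R) F1 F2 :
  (forall i, F (lshift n2 i) = F1 i) -> (forall i, F (rshift n1 i) = F2 i) ->
  \sum_(i < n1 + n2) F i = \sum_(i < n1) F1 i + \sum_(i < n2) F2 i.
Proof.
by move=> H1 H2; rewrite big_split_ord; congr (_ + _); apply: eq_bigr.
Qed.

Lemma hull_convex a b (t : R) : K a -> K b -> 0 <= t -> t <= 1 ->
  K (t * a.1 + (1 - t) * b.1, t * a.2 + (1 - t) * b.2).
Proof.
move=> [n1 [lam1 [pt1 [L10 [L11 [LU1 [E11 E12]]]]]]].
move=> [n2 [lam2 [pt2 [L20 [L21 [LU2 [E21 E22]]]]]]] t0 t1.
pose lam (i : 'I_(n1 + n2)) :=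
  match split i with inl x => t * lam1 x | inr y => (1 - t) * lam2 y end.
pose pt (i : 'I_(n1 + n2)) := match split i with inl x => pt1 x | inr y => pt2 y end.
have sl (i : 'I_n1) : split (lshift n2 i) = inl i by exact: (@unsplitK n1 n2 (inl i)).
have sr (i : 'I_n2) : split (rshift n1 i) = inr i by exact: (@unsplitK n1 n2 (inr i)).
exists (n1 + n2)%N, lam, pt; split.
  by move=> i; rewrite /lam; case: (split i) => x; apply: mulr_ge0 => //; lra.
split.
  rewrite (@sum_split_ord _ _ _ (fun i => t * lam1 i) (fun i => (1 - t) * lam2 i)).
  - by rewrite -!mulr_sumr L11 L21; ring.
  - by move=> i; rewrite /lam sl.
  - by move=> i; rewrite /lam sr.
split; first by move=> i; rewrite /pt; case: (split i).
rewrite (@sum_split_ord _ _ _ (fun i => t * lam1 i * (pt1 i).1)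
                              (fun i => (1 - t) * lam2 i * (pt2 i).1)); last 2 first.
- by move=> i; rewrite /lam /pt sl.
- by move=> i; rewrite /lam /pt sr.
rewrite (@sum_split_ord _ _ _ (fun i => t * lam1 i * (pt1 i).2)
                              (fun i => (1 - t) * lam2 i * (pt2 i).2)); last 2 first.
- by move=> i; rewrite /lam /pt sl.
- by move=> i; rewrite /lam /pt sr.
rewrite E11 E12 E21 E22 !mulr_sumr; split; congr (_ + _); apply: eq_bigr => i _; ring.
Qed.

Lemma hull_above_line (al be sg c Y : R) :
  0 <= al -> 0 < be ->
  (forall i j, g i j != 0 -> c <= wdeg al be i j /\
     (wdeg al be i j = c -> sg * Y <= sg * j%:R)) ->
  forall v, K v ->
    c <= al * v.1 + be * v.2 /\ (al * v.1 + be * v.2 = c -> sg * Y <= sg * v.2).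
Proof.
move=> Hal Hbe Hg v [n [lam [pt [L0 [L1 [LU [E1 E2]]]]]]].
have Ev : al * v.1 + be * v.2 = \sum_k lam k * (al * (pt k).1 + be * (pt k).2).
  rewrite E1 E2 !mulr_sumr -big_split; apply: eq_bigr => k _ /=; ring.
have Hk k : c <= al * (pt k).1 + be * (pt k).2 /\
    (al * (pt k).1 + be * (pt k).2 = c -> sg * Y <= sg * (pt k).2).
  have [i [j [nz [hi hj]]]] := LU k; have [c1 c2] := Hg _ _ nz.
  have a1 : al * i%:R <= al * (pt k).1 by rewrite ler_wpM2l.
  have b1 : be * j%:R <= be * (pt k).2 by rewrite ler_wpM2l // ltW.
  split; first by move: c1; rewrite /wdeg; lra.
  move=> e; have e1 : wdeg al be i j = c by move: c1; rewrite /wdeg; lra.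
  have e2 : be * j%:R = be * (pt k).2 by move: c1; rewrite /wdeg; lra.
  by have := c2 e1; rewrite (mulfI (lt0r_neq0 Hbe) e2).
have Sc : c = \sum_k lam k * c by rewrite -mulr_suml L1 mul1r.
split.
  rewrite Ev {1}Sc; apply: ler_sum => k _; apply: ler_wpM2l => //; exact: (Hk k).1.
move=> e.
(* on the line, every point carrying positive mass is itself on the line *)
have Z k : lam k * (al * (pt k).1 + be * (pt k).2 - c) = 0.
  have : \sum_k lam k * (al * (pt k).1 + be * (pt k).2 - c) = 0.
    under eq_bigr do rewrite mulrBr.
    by rewrite sumrB -Ev -Sc e subrr.
  move/psumr_eq0P => H; apply: H => // k' _; apply: mulr_ge0 => //.
  rewrite subr_ge0; exact: (Hk k').1.
have SY : sg * Y = \sum_k lam k * (sg * Y) by rewrite -mulr_suml L1 mul1r.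
rewrite E2 mulr_sumr SY; apply: ler_sum => k _; rewrite [sg * (_ * _)]mulrCA.
have [->|nz] := eqVneq (lam k) 0; first by rewrite !mul0r.
apply: ler_wpM2l => //; apply: (Hk k).2.
by move/eqP: (Z k); rewrite mulf_eq0 (negbTE nz) /= subr_eq0 => /eqP.
Qed.

Lemma leading_hull (al be sg : R) X Y :
  0 <= al -> 0 < be -> leading g al be sg X Y -> forall v, K v ->
  wdeg al be X Y <= al * v.1 + be * v.2 /\
  (al * v.1 + be * v.2 = wdeg al be X Y -> sg * Y%:R <= sg * v.2).
Proof.
by move=> Hal Hbe [_ HL]; apply: hull_above_line => // i j /HL.
Qed.

Lemma leading_vertex (al be sg : R) X Y :
  0 < al -> 0 < be -> sg != 0 -> leading g al be sg X Y -> vertex K (pt R X Y).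
Proof.
move=> Hal Hbe Hsg L; have [nz _] := L.
split; first by apply: support_in_hull; exists X, Y.
move=> [a1 a2] [b1 b2] t Ka Kb t0 t1 /= e1 e2.
have [A1 A2] := leading_hull (ltW Hal) Hbe L Ka.
have [B1 B2] := leading_hull (ltW Hal) Hbe L Kb; rewrite /= in A1 A2 B1 B2.
move: A1 A2 B1 B2; set c := wdeg al be X Y => A1 A2 B1 B2.
have ef : c = t * (al * a1 + be * a2) + (1 - t) * (al * b1 + be * b2).
  by rewrite /c /wdeg e1 e2; ring.
move: A1 B1 ef; set xa := al * a1 + be * a2; set xb := al * b1 + be * b2 => A1 B1 ef.
have ea : xa = c by nra.
have eb : xb = c by nra.
have ya := A2 ea; have yb := B2 eb.
have ey : sg * Y%:R = t * (sg * a2) + (1 - t) * (sg * b2) by rewrite e2; ring.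
move: ya yb ey; set sa := sg * a2; set sb := sg * b2 => ya yb ey.
have a2Y : a2 = Y%:R by apply: (mulfI Hsg); rewrite -/sa; nra.
have b2Y : b2 = Y%:R by apply: (mulfI Hsg); rewrite -/sb; nra.
have : al * a1 = al * b1 by move: ea eb; rewrite /xa /xb a2Y b2Y; lra.
by move/(mulfI (lt0r_neq0 Hal)) => ->; rewrite a2Y b2Y.
Qed.

Lemma no_vertex_between (al be : R) (A B V : R * R) :
  0 < al -> 0 < be -> K A -> K B -> A.1 < V.1 -> V.1 < B.1 ->
  al * A.1 + be * A.2 <= al * V.1 + be * V.2 ->
  al * B.1 + be * B.2 <= al * V.1 + be * V.2 -> ~ vertex K V.
Proof.
move=> Hal Hbe KA KB h1 h2 pA pB [KV HV].
pose t := (B.1 - V.1) / (B.1 - A.1).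
have dpos : 0 < B.1 - A.1 by lra.
have t0 : 0 < t by apply: divr_gt0; lra.
have t1 : t < 1 by rewrite /t ltr_pdivrMr //; lra.
have ex : V.1 = t * A.1 + (1 - t) * B.1 by rewrite /t; field; lra.
(* P is the point of the chord [A,B] below V *)
pose P := (t * A.1 + (1 - t) * B.1, t * A.2 + (1 - t) * B.2).
have KP : K P by apply: hull_convex => //; lra.
have hP : P.2 <= V.2.
  by rewrite -(ler_pM2l Hbe) /P /=; nra.
have [e|nz] := eqVneq P.2 V.2.
  by have eAB := HV A B t KA KB t0 t1 ex (esym e); move: h1 h2; rewrite eAB; lra.
(* otherwise V is the midpoint of P and a point of N(g) straight above it *)
pose h := V.2 - P.2.
have hpos : 0 < h by rewrite /h subr_gt0 lt_neqAle nz hP.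
have KP' : K (P.1 + 0, P.2 + 2 * h) by apply: hull_shift => //; lra.
have hlf0 : (0 : R) < 1/2 by lra.
have hlf1 : (1/2 : R) < 1 by lra.
have E : P = (P.1 + 0, P.2 + 2 * h).
  apply: (HV P _ (1/2) KP KP' hlf0 hlf1); rewrite /P /= -?ex; first by ring.
  by rewrite /h /P /=; field.
have : P.2 = P.2 + 2 * h by rewrite {1}E.
lra.
Qed.

Lemma next_vertex_of_leading (al be : R) X1 Y1 X2 Y2 :
  0 < al -> 0 < be -> leading g al be (-1) X1 Y1 -> leading g al be 1 X2 Y2 ->
  wdeg al be X2 Y2 = wdeg al be X1 Y1 -> (X1 < X2)%N ->
  next_vertex K (pt R X1 Y1) (pt R X2 Y2) /\
  slope (pt R X1 Y1) (pt R X2 Y2) = - (al / be) /\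
  yintercept (pt R X1 Y1) (pt R X2 Y2) = wdeg al be X1 Y1 / be.
Proof.
move=> Hal Hbe L1 L2 E lt.
have ltR : (X1%:R : R) < X2%:R by rewrite ltr_nat.
have sl : slope (pt R X1 Y1) (pt R X2 Y2) = - (al / be).
  rewrite /slope /pt /=; move: E; rewrite /wdeg => E.
  have nz : (X2%:R - X1%:R : R) != 0 by rewrite subr_eq0 gt_eqF.
  have be0 := lt0r_neq0 Hbe.
  have eY : (Y2%:R : R) = Y1%:R - al / be * (X2%:R - X1%:R).
    by apply: (mulfI be0); rewrite mulrBr mulrA mulrCA divff // mulr1; lra.
  by rewrite eY; field; rewrite be0 nz.
split; last split => //; last first.
  by rewrite /yintercept sl /pt /wdeg /=; field; rewrite lt0r_neq0.
split; first exact: leading_vertex Hal Hbe (ltr0_neq0 (ltrN10 R)) L1.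
split; first exact: leading_vertex Hal Hbe (oner_neq0 R) L2.
split => // V [KV HV] [a1 a2].
have [[g1 _] [g2 _]] := (L1, L2).
apply: (no_vertex_between Hal Hbe _ _ a1 a2 _ _ (conj KV HV)).
- by apply: support_in_hull; exists X1, Y1.
- by apply: support_in_hull; exists X2, Y2.
- exact: (leading_hull (ltW Hal) Hbe L1 KV).1.
- by have := (leading_hull (ltW Hal) Hbe L1 KV).1; rewrite /pt /= -E.
Qed.

End NewtonPolygonGeometry.

Lemma yintercept_wdeg x1 y1 x2 y2 : (x1 < x2)%N -> (y2 < y1)%N ->
  yintercept (pt R x1 y1) (pt R x2 y2) =
  wdeg (y1 - y2)%N%:R (x2 - x1)%N%:R x1 y1 / (x2 - x1)%N%:R.
Proof.
move=> hx hy; rewrite /yintercept /slope /pt /wdeg /= !natrB ?(ltnW hx) ?(ltnW hy) //.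
have : (x1%:R : R) < x2%:R by rewrite ltr_nat.
by move=> h; field; lra.
Qed.

Lemma wdeg_segment x1 y1 x2 y2 : (x1 < x2)%N -> (y2 < y1)%N ->
  wdeg (y1 - y2)%N%:R (x2 - x1)%N%:R x2 y2 = wdeg (y1 - y2)%N%:R (x2 - x1)%N%:R x1 y1.
Proof. by move=> hx hy; rewrite /wdeg !natrB ?(ltnW hx) ?(ltnW hy) //; ring. Qed.

Lemma leading_exists q (Am An : nat) sg :
  (0 < Am)%N -> (0 < An)%N -> sg = 1 \/ sg = -1 -> (exists i j, q i j != 0) ->
  exists X Y, leading q Am%:R An%:R sg X Y.
Proof.
move=> HAm HAn Hsg [i0 [j0 nz0]].
have wN i j : wdeg (Am%:R : R) An%:R i j = (Am * i + An * j)%N%:R.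
  by rewrite /wdeg natrD !natrM.
pose layer n := `[< exists i j, q i j != 0 /\ (Am * i + An * j)%N = n >].
have : exists n, layer n by exists (Am * i0 + An * j0)%N; apply/asboolP; exists i0, j0.
case/ex_minnP => n0 /asboolP [X0 [Y0 [nzX0 e0]]] n0_min.
pose onlayer y := `[< exists i, q i y != 0 /\ (Am * i + An * y)%N = n0 >].
have onY0 : exists y, onlayer y.
  by exists Y0; apply/asboolP; exists X0.
suff [Y /asboolP [X [nzX eX]] HY] : exists2 Y, onlayer Y &
    forall i j, q i j != 0 -> (Am * i + An * j)%N = n0 -> sg * Y%:R <= sg * j%:R.
  exists X, Y; split => // i j nz; rewrite !wN eX ler_nat; split.
    by apply: n0_min; apply/asboolP; exists i, j.
  by move/natr_inj => e; apply: HY nz e.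
case: Hsg => ->.
  case: (ex_minnP onY0) => Y HY Ymin; exists Y => // i j nz e.
  by rewrite !mul1r ler_nat; apply: Ymin; apply/asboolP; exists i.
have bnd y : onlayer y -> (y <= n0)%N by move=> /asboolP [i [_ <-]]; nia.
case: (ex_maxnP onY0 bnd) => Y HY Ymax; exists Y => // i j nz e.
by rewrite !mulN1r lerN2 ler_nat; apply: Ymax; apply/asboolP; exists i.
Qed.

Section EdgesOfNq.
Variables (q : ps2 R) (s : nat) (nv mv : nat -> nat).
Hypothesis q_neq0 : exists i j, q i j != 0.
Hypothesis q_vertices : forall v, vertex (newton_polygon q) v <->
  exists2 i, (1 <= i <= s)%N & v = pt R (nv i) (mv i).
Hypothesis q_vertices_sorted : forall i, (1 <= i)%N -> (i < s)%N ->
  (nv i < nv i.+1)%N /\ (mv i.+1 < mv i)%N.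

(* inner normal of the edge from the j-th to the (j+1)-th vertex *)
Local Notation al j := ((mv j - mv j.+1)%N%:R : R).
Local Notation be j := ((nv j.+1 - nv j)%N%:R : R).

Lemma listed_vertex i : (1 <= i <= s)%N -> vertex (newton_polygon q) (pt R (nv i) (mv i)).
Proof. by move=> Hi; apply/q_vertices; exists i. Qed.

Lemma listed_vertex_in_hull i :
  (1 <= i <= s)%N -> newton_polygon q (pt R (nv i) (mv i)).
Proof. by case/listed_vertex. Qed.

Lemma vertices_sorted a b : (1 <= a)%N -> (a < b)%N -> (b <= s)%N ->
  (nv a < nv b)%N /\ (mv b < mv a)%N.
Proof.
move=> Ha; elim: b => [//|b IH] Hab Hb.
have [n1 m1] := q_vertices_sorted (leq_trans Ha (ltnSE Hab)) Hb.
case: (ltnP a b) => [lt|ge]; last first.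
  by have -> : a = b by apply/eqP; rewrite eqn_leq ge ltnSE.
have [n2 m2] := IH lt (ltnW Hb); split; [exact: ltn_trans n2 n1 | exact: ltn_trans m1 m2].
Qed.

Lemma edge_weights_pos j : (1 <= j)%N -> (j < s)%N -> 0 < al j /\ 0 < be j.
Proof.
by move=> j1 js; have [nj mj] := q_vertices_sorted j1 js; rewrite !ltr0n !subn_gt0.
Qed.

(* A leading monomial of q for the normal of the j-th edge is one of the two
   end points of that edge: any other vertex would make the j-th or the
   (j+1)-th vertex lie between two points of N(q) above its weight layer. *)
Lemma leading_on_edge j sg X Y :
  (1 <= j)%N -> (j < s)%N -> sg != 0 -> leading q (al j) (be j) sg X Y ->
  (X = nv j /\ Y = mv j) \/ (X = nv j.+1 /\ Y = mv j.+1).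
Proof.
move=> j1 js sg0 L.
have [al0 be0] := edge_weights_pos j1 js.
have [nj mj] := q_vertices_sorted j1 js.
have Hj : (1 <= j <= s)%N by rewrite j1 ltnW.
have Hj' : (1 <= j.+1 <= s)%N by rewrite js andbT.
have [i Hi [/natr_inj eX /natr_inj eY]] := (q_vertices _).1 (leading_vertex al0 be0 sg0 L).
subst X Y.
have low v : newton_polygon q v -> wdeg (al j) (be j) (nv i) (mv i) <= al j * v.1 + be j * v.2.
  by move=> Kv; have [] := leading_hull (ltW al0) be0 L Kv.
have ej := wdeg_segment nj mj.
case: (ltngtP i j) => [ij|ji|->]; [exfalso | | by left].
  have [ni _] := vertices_sorted (andP Hi).1 ij (ltnW js).
  apply: (no_vertex_between al0 be0 (listed_vertex_in_hull Hi)
    (listed_vertex_in_hull Hj') _ _ _ _ (listed_vertex Hj)); rewrite /= ?ltr_nat //.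
  - exact: low (listed_vertex_in_hull Hj).
  - by move: ej; rewrite /wdeg => ->.
case: (ltngtP i j.+1) => [ij|ji'|->]; [by move: ji; rewrite ltnNge -ltnS ij | exfalso | by right].
have [ni _] := vertices_sorted (leq_trans j1 (leqnSn j)) ji' (andP Hi).2.
apply: (no_vertex_between al0 be0 (listed_vertex_in_hull Hj)
  (listed_vertex_in_hull Hi) _ _ _ _ (listed_vertex Hj')); rewrite /= ?ltr_nat //.
- by move: ej; rewrite /wdeg => <-.
- exact: low (listed_vertex_in_hull Hj').
Qed.

Lemma edge_leading j : (1 <= j)%N -> (j < s)%N ->
  leading q (al j) (be j) (-1) (nv j) (mv j) /\
  leading q (al j) (be j) 1 (nv j.+1) (mv j.+1).
Proof.
move=> j1 js.
have [nj mj] := q_vertices_sorted j1 js.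
have [al0 be0] := edge_weights_pos j1 js.
have Hj : (1 <= j <= s)%N by rewrite j1 ltnW.
have Hj' : (1 <= j.+1 <= s)%N by rewrite js andbT.
have ej := wdeg_segment nj mj.
have pos : (0 < mv j - mv j.+1)%N /\ (0 < nv j.+1 - nv j)%N by rewrite !subn_gt0.
have [X1 [Y1 L1]] := leading_exists (sg := -1) pos.1 pos.2 (or_intror erefl) q_neq0.
have [X2 [Y2 L2]] := leading_exists (sg := 1) pos.1 pos.2 (or_introl erefl) q_neq0.
split.
  case: (leading_on_edge j1 js (ltr0_neq0 (ltrN10 R)) L1) => [] [eX eY]; subst X1 Y1 => //.
  have [_ /(_ (esym ej))] := leading_hull (ltW al0) be0 L1 (listed_vertex_in_hull Hj).
  by rewrite /= !mulN1r lerN2 ler_nat leqNgt mj.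
case: (leading_on_edge j1 js (oner_neq0 R) L2) => [] [eX eY]; subst X2 Y2 => //.
have [_ /(_ ej)] := leading_hull (ltW al0) be0 L2 (listed_vertex_in_hull Hj').
by rewrite /= !mul1r ler_nat leqNgt mj.
Qed.

Lemma edge_slopes_decrease j : (1 <= j)%N -> (j.+1 < s)%N ->
  al j.+1 * be j < al j * be j.+1.
Proof.
move=> j1 js.
have [nj mj] := q_vertices_sorted j1 (ltnW js).
have [nj1 mj1] := q_vertices_sorted (leq_trans j1 (leqnSn j)) js.
have [[qj _] _] := edge_leading j1 (ltnW js).
have [[_ L] _] := edge_leading (leq_trans j1 (leqnSn j)) js.
have [c1 c2] := L _ _ qj.
(* vertex j lies strictly above the weight layer of the (j+1)-th edge *)
have lt : wdeg (al j.+1) (be j.+1) (nv j.+1) (mv j.+1) < wdeg (al j.+1) (be j.+1) (nv j) (mv j).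
  rewrite lt_neqAle c1 andbT; apply/negP => /eqP e.
  by have := c2 (esym e); rewrite !mulN1r lerN2 ler_nat leqNgt mj.
move: lt; rewrite /wdeg !natrB ?(ltnW nj) ?(ltnW mj) ?(ltnW nj1) ?(ltnW mj1) //.
move=> lt; nra.
Qed.

Lemma adjacent_edges k : (2 <= k)%N -> (k < s)%N ->
  [/\ leading q (al k) (be k) (-1) (nv k) (mv k),
      leading q (al k) (be k) 1 (nv k.+1) (mv k.+1),
      leading q (mv k.-1 - mv k)%N%:R (nv k - nv k.-1)%N%:R 1 (nv k) (mv k) &
      al k * (nv k - nv k.-1)%N%:R < (mv k.-1 - mv k)%N%:R * be k].
Proof.
move=> k2 ks.
have k1 : (1 <= k.-1)%N by move: k2; lia.
have km1 : (k.-1.+1 < s)%N by rewrite prednK // ltnW.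
have [Ltop Lbot] := edge_leading (ltnW k2) ks.
have [_ Lleft] := edge_leading k1 (ltnW km1).
have conv := edge_slopes_decrease k1 km1.
by rewrite prednK ?(ltnW k2) in Lleft conv.
Qed.

End EdgesOfNq.

Lemma vertex_strict_min q (al be al1 be1 u v : R) gam d :
  0 < al -> leading q al be (-1) gam d -> leading q al1 be1 1 gam d ->
  al * be1 < al1 * be -> v * al < u * be -> u * be1 < v * al1 ->
  strict_min q u v gam d.
Proof.
move=> al0 [nz H2] [_ H1] hc hS hT; split => // a b qab.
have [p2 e2] := H2 a b qab; have [p1 e1] := H1 a b qab.
(* (u,v) is a positive combination of the two normals *)
have key : (al1 * be - al * be1) * (a%:R * u + b%:R * v - (gam%:R * u + d%:R * v)) =
  (u * be - v * al) * (wdeg al1 be1 a b - wdeg al1 be1 gam d) +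
  (v * al1 - u * be1) * (wdeg al be a b - wdeg al be gam d) by rewrite /wdeg; ring.
move: key; set x := wdeg al1 be1 a b - _; set y := wdeg al be a b - _ => key.
have x0 : 0 <= x by rewrite subr_ge0.
have y0 : 0 <= y by rewrite subr_ge0.
have HS : 0 < u * be - v * al by lra.
have HT : 0 < v * al1 - u * be1 by lra.
have Hdet : 0 < al1 * be - al * be1 by lra.
have Sx : 0 <= (u * be - v * al) * x by apply: mulr_ge0 => //; lra.
have Ty : 0 <= (v * al1 - u * be1) * y by apply: mulr_ge0 => //; lra.
split; first by rewrite -subr_ge0 -(pmulr_rge0 _ Hdet) key; lra.
move=> e.
(* equality forces both weighted degrees to be minimal *)
have x_0 : x = 0.
  by apply: (mulfI (lt0r_neq0 HS)); move: key; rewrite e subrr mulr0; lra.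
have y_0 : y = 0.
  by apply: (mulfI (lt0r_neq0 HT)); move: key; rewrite e subrr mulr0; lra.
have ex : wdeg al1 be1 a b = wdeg al1 be1 gam d by apply/eqP; rewrite -subr_eq0 -/x x_0.
have ey : wdeg al be a b = wdeg al be gam d by apply/eqP; rewrite -subr_eq0 -/y y_0.
have db : (d <= b)%N by move: (e1 ex); rewrite !mul1r ler_nat.
have bd : (b <= d)%N by move: (e2 ey); rewrite !mulN1r lerN2 ler_nat.
have bd' : b = d by apply/eqP; rewrite eqn_leq bd db.
split => //; apply/natr_inj/(mulfI (lt0r_neq0 al0)).
by move: ey; rewrite /wdeg bd'; lra.
Qed.

(* Composing with f acts on the forms induced by the leading terms through
   (u,v) |-> (dl u, gam u + d v). *)
Lemma cone_step (al be al1 be1 dl gam d u v : R) :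
  0 < d -> 0 < u -> al * gam + be * d < be * dl -> be1 * dl <= al1 * gam + be1 * d ->
  v * al <= u * be -> u * be1 < v * al1 ->
  (gam * u + d * v) * al < (dl * u) * be /\ (dl * u) * be1 < (gam * u + d * v) * al1.
Proof. by move=> d0 u0 h1 h2 c1 c2; split; nra. Qed.

Lemma cone_orbit (al be al1 be1 dl gam d : R) (u v : nat -> R) :
  0 < al -> 0 < d -> 0 < dl -> al * be1 < al1 * be ->
  al * gam + be * d < be * dl -> be1 * dl <= al1 * gam + be1 * d ->
  u 0%N = dl * al -> v 0%N = gam * al + d * be ->
  (forall m, u m.+1 = dl * u m) -> (forall m, v m.+1 = gam * u m + d * v m) ->
  forall m, v m * al < u m * be /\ u m * be1 < v m * al1.
Proof.
move=> al0 d0 dl0 conv h1 h2 u0 v0 uS vS.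
suff H m : 0 < u m /\ v m * al < u m * be /\ u m * be1 < v m * al1.
  by move=> m; case: (H m).
elim: m => [|m [um [c1 c2]]].
  rewrite u0 v0; split; first exact: mulr_gt0.
  by apply: cone_step => //; lra.
rewrite uS vS; split; first exact: mulr_gt0.
exact: cone_step (ltW c1) c2.
Qed.

Lemma gsum0 a b : gsum a b 0 = 0%N.
Proof. by rewrite /gsum big_ord0. Qed.

Lemma gsumS a b n : gsum a b n.+1 = (a ^ n + b * gsum a b n)%N.
Proof.
rewrite /gsum big_ord_recl /= subn0 expn0 muln1; congr (_ + _)%N.
rewrite big_distrr /=; apply: eq_bigr => i _.
have -> : (n - bump 0 i = n.-1 - i)%N by rewrite /bump /=; lia.
by rewrite /bump /= expnS mulnCA.
Qed.

Lemma gsumSr a b n : gsum a b n.+1 = (a * gsum a b n + b ^ n)%N.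
Proof.
rewrite /gsum big_ord_recr /= subnn expn0 mul1n; congr (_ + _)%N.
rewrite big_distrr /=; apply: eq_bigr => i _.
have -> : (n - i = (n.-1 - i).+1)%N by have := ltn_ord i; lia.
by rewrite expnS mulnA.
Qed.

Section Iterates.
Variables (p : ps1 R) (delta : nat).
Hypothesis delta_pos : (1 <= delta)%N.
Hypothesis p_order : forall i, (i < delta)%N -> p i = 0.
Hypothesis p_lead : p delta != 0.

Lemma fiterS q n : fiter p q n.+1 =
  (comp2 (lift1 p) (fiter p q n).1 (fiter p q n).2, comp2 q (fiter p q n).1 (fiter p q n).2).
Proof. by []. Qed.

Lemma lift1_strict_min (u v : R) : 0 < u -> strict_min (lift1 p) u v delta 0.
Proof.
move=> u0; split => [|a b]; rewrite /lift1 //; case: (b =P 0%N) => [->|_]; last by rewrite eqxx.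
move=> pa; have da : (delta <= a)%N by rewrite leqNgt; apply/negP => /p_order; apply/eqP.
by rewrite !mul0r !addr0 ler_pM2r // ler_nat; split => // /(mulIf (lt0r_neq0 u0))/natr_inj.
Qed.

Lemma leading_first_comp P S al be sg N XS YS :
  0 < al -> 0 <= be -> sg != 0 ->
  leading P al be sg (delta ^ N) 0 -> leading S al be sg XS YS -> (0 < XS + YS)%N ->
  leading (comp2 (lift1 p) P S) al be sg (delta ^ N.+1) 0.
Proof.
move=> al0 be0 sg0 LP LS HS.
have u0 : 0 < wdeg al be (delta ^ N) 0.
  by rewrite /wdeg mulr0 addr0 mulr_gt0 // ltr0n expn_gt0 delta_pos.
have := leading_comp (lt0r_neq0 al0) sg0 LP LS _ HS (strict_min_lexmin _ _ (lift1_strict_min _ u0)).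
by rewrite mul0n addn0 muln0 addn0 -expnS addn0 expn_gt0 delta_pos; apply.
Qed.

Lemma leading_first_iterate q al be sg a0 b0 :
  0 < al -> 0 <= be -> sg != 0 -> leading q al be sg a0 b0 ->
  leading (fiter p q 1).1 al be sg delta 0 /\ leading (fiter p q 1).2 al be sg a0 b0.
Proof.
move=> al0 be0 sg0 Lq; rewrite fiterS /=.
have LP := leading_Xz al be sg; have LS := leading_Xw al be sg.
split; first by have := leading_first_comp (N := 0) al0 be0 sg0 LP LS; rewrite expn1; apply.
have := leading_comp (lt0r_neq0 al0) sg0 LP LS isT isT (a0 := a0) (b0 := b0).
rewrite !muln1 !muln0 addn0 add0n; apply.
have -> : wdeg al be 1 0 = al by rewrite /wdeg; ring.
have -> : wdeg al be 0 1 = be by rewrite /wdeg; ring.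
by rewrite mulr0 mulr1; exact: leading_lexmin (lt0r_neq0 al0) sg0 Lq.
Qed.

Lemma wdeg_gsum (al be : R) a0 b0 : wdeg al be a0 b0 = be * delta%:R ->
  forall n, wdeg al be (gsum delta b0 n * a0) (b0 ^ n) = be * (delta ^ n)%:R.
Proof.
move=> H; elim=> [|n IH]; first by rewrite gsum0 /wdeg !expn0 mul0n mulr0 add0r.
move: H IH; rewrite /wdeg gsumS mulnDl !natrD !natrM !expnS !natrM => H IH.
have -> : al * ((delta ^ n)%:R * a0%:R + (b0%:R * (gsum delta b0 n)%:R) * a0%:R) +
  be * (b0%:R * (b0 ^ n)%:R) = (delta ^ n)%:R * (al * a0%:R) +
  b0%:R * (al * ((gsum delta b0 n)%:R * a0%:R) + be * (b0 ^ n)%:R) by ring.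
rewrite IH (_ : al * a0%:R = be * delta%:R - be * b0%:R); first by ring.
by rewrite -H; ring.
Qed.

Lemma leading_iterates_edge q al be sg a0 b0 :
  0 < al -> 0 < be -> sg != 0 -> (0 < b0)%N ->
  leading q al be sg a0 b0 -> wdeg al be a0 b0 = be * delta%:R ->
  forall n, leading (fiter p q n).1 al be sg (delta ^ n) 0 /\
            leading (fiter p q n).2 al be sg (gsum delta b0 n * a0) (b0 ^ n).
Proof.
move=> al0 be0 sg0 b0_pos Lq Hwdeg.
elim=> [|n [LP LS]].
  by rewrite gsum0 mul0n; split; [exact: leading_Xz | exact: leading_Xw].
have HS : (0 < gsum delta b0 n * a0 + b0 ^ n)%N by rewrite addn_gt0 expn_gt0 b0_pos orbT.
rewrite fiterS /=; split; first exact: leading_first_comp (ltW be0) sg0 LP LS HS.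
have -> : (gsum delta b0 n.+1 * a0 = a0 * delta ^ n + b0 * (gsum delta b0 n * a0))%N.
  by rewrite gsumS mulnDl [(delta ^ n * a0)%N]mulnC mulnA.
have -> : (b0 ^ n.+1 = a0 * 0 + b0 * b0 ^ n)%N by rewrite muln0 add0n expnS.
apply: (leading_comp (lt0r_neq0 al0) sg0 LP LS _ HS); first by rewrite addn0 expn_gt0 delta_pos.
(* the forms induced by the leading terms are those of q, rescaled *)
have Dp : (0 : R) < (delta ^ n)%:R by rewrite ltr0n expn_gt0 delta_pos.
have Bp : (0 : R) < (b0 ^ n)%:R by rewrite ltr0n expn_gt0 b0_pos.
have := lexmin_scale Dp Bp (leading_lexmin (lt0r_neq0 al0) sg0 Lq).
have -> : wdeg al be (delta ^ n) 0 = (delta ^ n)%:R * al by rewrite /wdeg; ring.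
rewrite wdeg_gsum // (_ : sg * 0%:R = (b0 ^ n)%:R * 0); last by rewrite !mulr0.
by rewrite [be * _]mulrC [sg * _]mulrC.
Qed.

Lemma leading_iterates_vertex q al be sg gam d X1 Y1 :
  0 < al -> 0 <= be -> sg != 0 -> (0 < d)%N -> (0 < X1 + Y1)%N ->
  leading q al be sg X1 Y1 ->
  (forall m, strict_min q (wdeg al be (delta ^ m.+1) 0)
     (wdeg al be (gam * delta * gsum delta d m + X1 * d ^ m) (Y1 * d ^ m)) gam d) ->
  forall m, leading (fiter p q m.+1).1 al be sg (delta ^ m.+1) 0 /\
    leading (fiter p q m.+1).2 al be sg
      (gam * delta * gsum delta d m + X1 * d ^ m) (Y1 * d ^ m).
Proof.
move=> al0 be0 sg0 d0 XY0 Lq Hmin; elim=> [|m [LP LS]].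
  rewrite gsum0 muln0 add0n expn0 !muln1 expn1.
  exact: leading_first_iterate.
have HS : (0 < gam * delta * gsum delta d m + X1 * d ^ m + Y1 * d ^ m)%N.
  by rewrite -addnA -mulnDl (leq_trans _ (leq_addl _ _)) // muln_gt0 XY0 expn_gt0 d0.
rewrite fiterS /=; split; first exact: leading_first_comp be0 sg0 LP LS HS.
have -> : (gam * delta * gsum delta d m.+1 + X1 * d ^ m.+1 =
   gam * delta ^ m.+1 + d * (gam * delta * gsum delta d m + X1 * d ^ m))%N.
  by rewrite gsumS !expnS; ring.
have -> : (Y1 * d ^ m.+1 = gam * 0 + d * (Y1 * d ^ m))%N by rewrite expnS; ring.
apply: (leading_comp (lt0r_neq0 al0) sg0 LP LS _ HS (strict_min_lexmin _ _ (Hmin m))).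
by rewrite addn0 expn_gt0 delta_pos.
Qed.

Lemma wdeg_vertex_chain (al be : R) gam d X1 Y1 m :
  wdeg al be (gam * delta * gsum delta d m + X1 * d ^ m) (Y1 * d ^ m) =
  al * (gam * delta * gsum delta d m)%:R + (d ^ m)%:R * wdeg al be X1 Y1.
Proof. by rewrite /wdeg !natrD !natrM; ring. Qed.

Lemma iterates_vertex_case q al be al1 be1 gam d C D :
  0 < al -> 0 < be -> al * be1 < al1 * be -> (gam < C)%N -> (0 < d)%N ->
  leading q al be (-1) gam d -> leading q al be 1 C D -> leading q al1 be1 1 gam d ->
  wdeg al be C D = wdeg al be gam d ->
  wdeg al be gam d < be * delta%:R -> be1 * delta%:R <= wdeg al1 be1 gam d ->
  forall m,
    let top := pt R (gam * gsum delta d m.+1) (d ^ m.+1) in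
    let bot := pt R (gam * delta * gsum delta d m + C * d ^ m) (D * d ^ m) in
    next_vertex (newton_polygon (Qn p q m.+1)) top bot /\
    slope top bot = - (al / be) /\ yintercept top bot < (delta ^ m.+1)%:R.
Proof.
move=> al0 be0 conv gC d0 Ltop Lbot Lleft eCD below above.
(* the forms induced by the leading terms of f^(m+1) *)
pose u m := wdeg al be (delta ^ m.+1) 0.
pose v m := wdeg al be (gam * delta * gsum delta d m + gam * d ^ m) (d * d ^ m).
have vE X1 Y1 m : wdeg al be X1 Y1 = wdeg al be gam d ->
    wdeg al be (gam * delta * gsum delta d m + X1 * d ^ m) (Y1 * d ^ m) = v m.
  by move=> e; rewrite /v !wdeg_vertex_chain e.
have cone : forall m, v m * al < u m * be /\ u m * be1 < v m * al1.
  apply: (cone_orbit (dl := delta%:R) (gam := gam%:R) (d := d%:R)) => //.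
  - by rewrite ltr0n.
  - by rewrite ltr0n.
  - by rewrite /u /wdeg expn1; ring.
  - by rewrite /v /wdeg gsum0 expn0 !muln1 muln0 add0n; ring.
  - by move=> m; rewrite /u /wdeg expnS natrM; ring.
  - by move=> m; rewrite /u /v /wdeg gsumS !expnS !(natrD, natrM); ring.
have smin m : strict_min q (u m) (v m) gam d.
  by have [c1 c2] := cone m; exact: vertex_strict_min al0 Ltop Lleft conv c1 c2.
have upper := leading_iterates_vertex al0 (ltW be0) (ltr0_neq0 (ltrN10 R)) d0
  (ltn_addl _ d0) Ltop smin.
have lower : forall m, leading (fiter p q m.+1).1 al be 1 (delta ^ m.+1) 0 /\
    leading (fiter p q m.+1).2 al be 1 (gam * delta * gsum delta d m + C * d ^ m) (D * d ^ m).
  apply: leading_iterates_vertex al0 (ltW be0) (oner_neq0 R) d0 _ Lbot _.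
    by rewrite (leq_trans _ (leq_addr _ _)) // (leq_ltn_trans _ gC).
  by move=> m; rewrite vE //; exact: smin.
move=> m /=.
have [_ LT] := upper m; have [_ LB] := lower m.
have lt : (gam * delta * gsum delta d m + gam * d ^ m <
           gam * delta * gsum delta d m + C * d ^ m)%N.
  by rewrite ltn_add2l ltn_pmul2r // expn_gt0 d0.
have [NV [SL YI]] := next_vertex_of_leading al0 be0 LT LB (vE _ _ m eCD) lt.
have -> : (gam * gsum delta d m.+1 = gam * delta * gsum delta d m + gam * d ^ m)%N.
  by rewrite gsumSr; ring.
rewrite (expnS d m); split => //; split => //.
rewrite YI ltr_pdivrMr // -(ltr_pM2r al0).
by have [c1 _] := cone m; move: c1; rewrite /u /v /wdeg mulr0 addr0; lra.
Qed.

Lemma iterates_edge_case q al be gam d C D :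
  0 < al -> 0 < be -> (D < d)%N -> (0 < D)%N ->
  leading q al be (-1) gam d -> leading q al be 1 C D ->
  wdeg al be gam d = be * delta%:R -> wdeg al be C D = be * delta%:R ->
  forall n, (1 <= n)%N ->
    let top := pt R (gam * gsum delta d n) (d ^ n) in
    let bot := pt R (gsum delta D n * C) (D ^ n) in
    next_vertex (newton_polygon (Qn p q n)) top bot /\
    slope top bot = - (al / be) /\ yintercept top bot = (delta ^ n)%:R.
Proof.
move=> al0 be0 Dd D0 Ltop Lbot etop ebot n n1 /=.
have d0 := ltn_trans D0 Dd.
have [_ LT] := leading_iterates_edge al0 be0 (ltr0_neq0 (ltrN10 R)) d0 Ltop etop n.
have [_ LB] := leading_iterates_edge al0 be0 (oner_neq0 R) D0 Lbot ebot n.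
have wT := wdeg_gsum etop n; have wB := wdeg_gsum ebot n.
(* on a common weight layer the lower point lies further right *)
have lt : (gsum delta d n * gam < gsum delta D n * C)%N.
  rewrite -(ltr_nat R) -(ltr_pM2l al0).
  have hy : (D ^ n)%:R < (d ^ n)%:R :> R by rewrite ltr_nat ltn_exp2r.
  by move: wT wB; rewrite /wdeg; nra.
have [NV [SL YI]] := next_vertex_of_leading al0 be0 LT LB (etrans wB (esym wT)) lt.
rewrite [(gam * _)%N]mulnC; split => //; split => //.
by rewrite YI wT mulrC mulKf // lt0r_neq0.
Qed.

End Iterates.
End LeadingTerms.

Unset Implicit Arguments.

Theorem proposition6 (R : realType) (p : ps1 R) (q : ps2 R) (delta : nat)
  (s : nat) (nv mv : nat -> nat) (k : nat) :
  (* p(z) = a_delta z^delta + O(z^(delta+1)), a_delta <> 0, delta >= 1 *)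
  (1 <= delta)%N -> (forall i, (i < delta)%N -> p i = 0) -> p delta != 0 ->
  convergent1 p ->
  (* q holomorphic, q(0,0) = 0, q not identically zero *)
  convergent2 q -> q 0%N 0%N = 0 -> (exists i j, q i j != 0) ->
  (* (n_1,m_1),...,(n_s,m_s) are the vertices of N(q), n increasing, m decreasing *)
  (forall v, vertex (newton_polygon q) v <->
     exists2 i, (1 <= i <= s)%N & v = pt R (nv i) (mv i)) ->
  (forall i, (1 <= i)%N -> (i < s)%N -> (nv i < nv i.+1)%N /\ (mv i.+1 < mv i)%N) ->
  (* Case 4 with index k *)
  (2 < s)%N -> (2 <= k)%N -> (k <= s.-1)%N ->
  yintercept (pt R (nv k) (mv k)) (pt R (nv k.+1) (mv k.+1)) <= delta%:R ->
  delta%:R <= yintercept (pt R (nv k.-1) (mv k.-1)) (pt R (nv k) (mv k)) ->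
  let gamma := nv k in let d := mv k in
  let l1 : R := ((nv k)%:R - (nv k.-1)%:R) / ((mv k.-1)%:R - (mv k)%:R) in
  let l2 : R := ((nv k.+1)%:R - (nv k)%:R) / ((mv k)%:R - (mv k.+1)%:R) - l1 in
  let Cc := nv k.+1 in let Dc := mv k.+1 in
  let gamma_n n := (gamma * gsum delta d n)%N in
  let C_n n : R := (gamma_n n)%:R - (gamma%:R - Cc%:R) * (d ^ n.-1)%:R in
  let D_n n : R := (Dc * d ^ n.-1)%:R in
  let Cs_n n : R := (gsum delta Dc n * Cc)%:R in
  let Ds_n n : R := (Dc ^ n)%:R in
  let T_k := yintercept (pt R (nv k) (mv k)) (pt R (nv k.+1) (mv k.+1)) in
  (* (i) *)
  (T_k < delta%:R ->
   forall n, (1 <= n)%N ->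
     next_vertex (newton_polygon (Qn p q n)) (pt R (gamma_n n) (d ^ n))
                 (C_n n, D_n n) /\
     slope (pt R (gamma_n n) (d ^ n)) (C_n n, D_n n) = - (l1 + l2)^-1 /\
     yintercept (pt R (gamma_n n) (d ^ n)) (C_n n, D_n n) < (delta ^ n)%:R) /\
  (* (ii) *)
  (T_k = delta%:R -> (0 < mv k.+1)%N ->
   forall n, (1 <= n)%N ->
     next_vertex (newton_polygon (Qn p q n)) (pt R (gamma_n n) (d ^ n))
                 (Cs_n n, Ds_n n) /\
     slope (pt R (gamma_n n) (d ^ n)) (Cs_n n, Ds_n n) = - (l1 + l2)^-1 /\
     yintercept (pt R (gamma_n n) (d ^ n)) (Cs_n n, Ds_n n) = (delta ^ n)%:R).
Proof.
move=> delta_pos p_order p_lead _ _ _ q_neq0 q_vertices q_sorted s_gt2 k_ge2 k_le.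
have k_lt : (k < s)%N by move: k_le s_gt2; lia.
have k1 : (1 <= k)%N by apply: ltnW.
have [Ltop Lbot Lleft conv] := adjacent_edges q_neq0 q_vertices q_sorted k_ge2 k_lt.
have [nk mk] := q_sorted k k1 k_lt.
have [nk1 mk1] : (nv k.-1 < nv k)%N /\ (mv k < mv k.-1)%N.
  by have := q_sorted k.-1; rewrite prednK //; apply; lia.
have [al0 be0] := edge_weights_pos R q_sorted k1 k_lt.
have be1_0 : (0 : R) < (nv k - nv k.-1)%N%:R by rewrite ltr0n subn_gt0.
(* both Case 4 inequalities as weighted degrees of the k-th vertex *)
rewrite (yintercept_wdeg R nk mk) (yintercept_wdeg R nk1 mk1) -(wdeg_segment R nk1 mk1).
rewrite ler_pdivrMr // ler_pdivlMr // => _ above; rewrite [delta%:R * _]mulrC in above.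
move=> gamma d l1 l2 Cc Dc gamma_n C_n D_n Cs_n Ds_n T_k.
have slopeE : - (l1 + l2)^-1 = - ((mv k - mv k.+1)%N%:R / (nv k.+1 - nv k)%N%:R) :> R.
  by rewrite /l2 addrC subrK invf_div !natrB ?(ltnW nk) ?(ltnW mk).
split=> [below n n1 | onT_k D0 n n1]; rewrite slopeE.
  case: n n1 => // m _.
  have -> : (C_n m.+1, D_n m.+1) =
      pt R (gamma * delta * gsum delta d m + Cc * d ^ m) (Dc * d ^ m).
    by rewrite /C_n /D_n /gamma_n /pt /= gsumSr; congr pair; rewrite !(natrD, natrM); ring.
  rewrite ltr_pdivrMr // [delta%:R * _]mulrC in below.
  exact (iterates_vertex_case delta_pos p_order p_lead al0 be0 conv nk
    (leq_ltn_trans (leq0n _) mk) Ltop Lbot Lleft (wdeg_segment R nk mk) below above m).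
have onT : wdeg (mv k - mv k.+1)%N%:R (nv k.+1 - nv k)%N%:R (nv k) (mv k) =
    (nv k.+1 - nv k)%N%:R * delta%:R :> R.
  by rewrite -onT_k mulrC divfK // lt0r_neq0.
exact (iterates_edge_case delta_pos p_order p_lead
  al0 be0 mk D0 Ltop Lbot onT (etrans (wdeg_segment R nk mk) onT) n1).
Qed.
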